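(* Let $\mathcal{P}=(\mathcal{V},\mathcal{L},\ell_0,\mathcal{T})$ be an integer program and $t_L=(\ell,\varphi,\eta,\ell)\in\mathcal{T}\setminus\mathcal{T}_0$. Let $\mathcal{SB}_L$ be a size bound for a loop $L$ which corresponds to $t_L$ via a variable renaming $\pi$. Then $\pi\circ\mathcal{SB}_L\circ\pi^{-1}$ (i.e., $x\mapsto\pi(\mathcal{SB}_L(\pi^{-1}(x)))$, where $\pi$ applied to a bound renames its variables, and with the value $x$ for variables $x\in\mathcal{V}\setminus\mathcal{V}'$) is a local size bound for $t_L$ w.r.t. $\{t_L\}$.
   Context: Integer program: tuple $(\mathcal{V},\mathcal{L},\ell_0,\mathcal{T})$ with finite variables $\mathcal{V}$, finite locations $\mathcal{L}$, initial location $\ell_0$, finite set $\mathcal{T}$ of transitions $(\ell,\varphi,\eta,\ell')$ with $\ell'\ne\ell_0$, guard $\varphi$ a formula built from inequations $p>0$ ($p\in\mathbb{Q}[\mathcal{V}]$) with $\wedge,\vee$, update $\eta:\mathcal{V}\to\mathbb{Z}[\mathcal{V}]$; $\mathcal{T}_0$ = transitions starting in $\ell_0$. States $\sigma:\mathcal{V}\to\mathbb{Z}$, $|\sigma|(x)=|\sigma(x)|$. $(\ell,\sigma)\to_t(\ell',\sigma')$ for $t=(\ell,\varphi,\eta,\ell')$ if $\sigma(\varphi)$ holds and $\sigma'(v)=\sigma(\eta(v))$ for all $v$; $\to_{\mathcal{T}'}=\bigcup_{t\in\mathcal{T}'}\to_t$, $^*$ reflexive-transitive closure. Entry transitions $\mathcal{E}_{\mathcal{T}'}=\{t=(\_,\_,\_,\ell)\in\mathcal{T}\setminus\mathcal{T}'\mid\exists(\ell,\_,\_,\_)\in\mathcal{T}'\}$.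 Bounds $\mathcal{B}$: smallest set containing $\mathbb{N}\cup\{\omega\}$ and the variables, closed under $+$, $\cdot$, $k^{(\cdot)}$ ($k\in\mathbb{N}$). Local size bound for $t'\in\mathcal{T}'$ w.r.t. $\mathcal{T}'$: $\mathcal{SB}_{t'}:\mathcal{V}\to\mathcal{B}$ with $|\sigma|(\mathcal{SB}_{t'}(x))\ge\sup\{|\sigma'(x)|\mid\exists\ell',(\_,\_,\_,\ell)\in\mathcal{E}_{\mathcal{T}'}.\ (\ell,\sigma)(\to^*_{\mathcal{T}'}\circ\to_{t'})(\ell',\sigma')\}$ for all $x,\sigma$. Loop $L=(\varphi',\eta')$ over $\{x_1,\dots,x_d\}$: guard $\varphi'$ and update $\eta':\{x_1,\dots,x_d\}\to\mathbb{Z}[x_1,\dots,x_d]$; runtime complexity $\mathrm{rc}(\sigma)=\inf\{n\mid\sigma(\eta'^n(\neg\varphi'))\}$ ($\inf\emptyset=\omega$), where $\eta'^n$ is $n$-fold application (substitution); a size bound for $L$ is $\mathcal{SB}_L:\{x_1,\dots,x_d\}\to\mathcal{B}$ with $|\sigma|(\mathcal{SB}_L(x))\ge\sup\{|\sigma(\eta'^n(x))|\mid n\le\mathrm{rc}(\sigma)\}$ for all $x$ and integer states $\sigma$. Correspondence: let $t=(\ell,\varphi,\eta,\ell)$ with $\varphi\in\mathcal{F}(\mathcal{V}')$ for some $\mathcal{V}'\subseteq\mathcal{V}$, $\eta(x)=x$ for $x\in\mathcal{V}\setminus\mathcal{V}'$ and $\eta(x)\in\mathbb{Z}[\mathcal{V}']$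 for $x\in\mathcal{V}'$. A loop $(\varphi',\eta')$ over $\{x_1,\dots,x_d\}$ corresponds to $t$ via the variable renaming (bijection) $\pi:\{x_1,\dots,x_d\}\to\mathcal{V}'$ if $\varphi$ is $\pi(\varphi')$ and $\eta(\pi(x_i))=\pi(\eta'(x_i))$ for all $i$. *)

From HB Require Import structures.
From mathcomp Require Import all_boot all_order all_algebra.
From mathcomp Require Import mpoly.
Set Implicit Arguments. Unset Strict Implicit. Unset Printing Implicit Defensive.
Import Order.TTheory GRing.Theory Num.Theory.
Local Open Scope ring_scope.

Inductive Fml (n : nat) : Type :=
  | FAtom : {mpoly rat[n]} -> Fml n
  | FAnd : Fml n -> Fml n -> Fml n
  | FOr : Fml n -> Fml n -> Fml n.

Fixpoint fml_holds n (phi : Fml n) (s : 'I_n -> int) : bool :=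
  match phi with
  | FAtom p => 0 < p.@[fun i => (s i)%:~R]
  | FAnd a b => fml_holds a s && fml_holds b s
  | FOr a b => fml_holds a s || fml_holds b s
  end.

Fixpoint fml_subst n k (phi : Fml n) (f : 'I_n -> {mpoly int[k]}) : Fml k :=
  match phi with
  | FAtom p => FAtom (p \mPo [tuple map_mpoly intr (f i) | i < n])
  | FAnd a b => FAnd (fml_subst a f) (fml_subst b f)
  | FOr a b => FOr (fml_subst a f) (fml_subst b f)
  end.

Definition mpoly_rename (R : nzRingType) d n (pi : 'I_d -> 'I_n) (p : {mpoly R[d]})
  : {mpoly R[n]} := p \mPo [tuple 'X_(pi i) | i < d].

Fixpoint fml_rename d n (pi : 'I_d -> 'I_n) (phi : Fml d) : Fml n :=
  match phi with
  | FAtom p => FAtom (mpoly_rename pi p)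
  | FAnd a b => FAnd (fml_rename pi a) (fml_rename pi b)
  | FOr a b => FOr (fml_rename pi a) (fml_rename pi b)
  end.

Inductive Bound (X : Type) : Type :=
  | BNat : nat -> Bound X
  | BOmega : Bound X
  | BVar : X -> Bound X
  | BAdd : Bound X -> Bound X -> Bound X
  | BMul : Bound X -> Bound X -> Bound X
  | BPow : nat -> Bound X -> Bound X.
Arguments BOmega {X}.

Fixpoint bmap X Y (f : X -> Y) (b : Bound X) : Bound Y :=
  match b with
  | BNat k => BNat Y k
  | BOmega => BOmega
  | BVar x => BVar (f x)
  | BAdd a c => BAdd (bmap f a) (bmap f c)
  | BMul a c => BMul (bmap f a) (bmap f c)
  | BPow k a => BPow k (bmap f a)
  end.

(* Extended naturals N u {omega}: None stands for omega. *)
Definition enat := option nat.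
Definition ele (a b : enat) : Prop :=
  match a, b with
  | _, None => True
  | None, Some _ => False
  | Some x, Some y => (x <= y)%N
  end.

(* evaluation of a bound under a valuation of the variables in nat;
   omega is absorbing for every operation *)
Fixpoint beval X (e : X -> nat) (b : Bound X) : enat :=
  match b with
  | BNat k => Some k
  | BOmega => None
  | BVar x => Some (e x)
  | BAdd a c => match beval e a, beval e c with
                | Some u, Some v => Some (u + v)%N | _, _ => None end
  | BMul a c => match beval e a, beval e c with
                | Some u, Some v => Some (u * v)%N | _, _ => None end
  | BPow k a => match beval e a with Some u => Some (k ^ u)%N | None => None end
  end.

Definition absst n (s : 'I_n -> int) : 'I_n -> nat := fun x => `|s x|%N.

(* Integer programs over variables 'I_n with locations in Loc; transitions are
   given by a finite index type TI. *)
Record IntProg (n : nat) (Loc : finType) := {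
  l0 : Loc;
  TI : finType;
  src : TI -> Loc;
  guard : TI -> Fml n;
  upd : TI -> 'I_n -> {mpoly int[n]};
  tgt : TI -> Loc;
  tgt_not_l0 : forall t, tgt t != l0
}.

Section Sem.
Variables (n : nat) (Loc : finType) (P : IntProg n Loc).

Definition step (t : TI P) (l : Loc) (s : 'I_n -> int) (l' : Loc) (s' : 'I_n -> int) : Prop :=
  src t = l /\ tgt t = l' /\ fml_holds (guard t) s /\
  forall v, s' v = (upd t v).@[s].

Inductive star (T' : pred (TI P)) : Loc -> ('I_n -> int) -> Loc -> ('I_n -> int) -> Prop :=
  | star_refl l s : star T' l s l s
  | star_step l s l1 s1 l2 s2 t :
      t \in T' -> step t l s l1 s1 -> star T' l1 s1 l2 s2 -> star T' l s l2 s2.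

Definition entry (T' : pred (TI P)) (e : TI P) : Prop :=
  e \notin T' /\ exists t, t \in T' /\ src t = tgt e.

Definition local_size_bound (T' : pred (TI P)) (t' : TI P) (SB : 'I_n -> Bound 'I_n) : Prop :=
  forall (x : 'I_n) (s : 'I_n -> int) (l l' : Loc) (s' : 'I_n -> int),
    (exists e, entry T' e /\ tgt e = l) ->
    (exists l1 s1, star T' l s l1 s1 /\ step t' l1 s1 l' s') ->
    ele (Some `|s' x|%N) (beval (absst s) (SB x)).

Definition T0 (t : TI P) : bool := src t == l0 P.
End Sem.

Fixpoint eta_pow d (eta : 'I_d -> {mpoly int[d]}) (k : nat) (x : 'I_d) : {mpoly int[d]} :=
  match k with
  | O => 'X_x
  | S k => (eta_pow eta k x) \mPo [tuple eta i | i < d]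
  end.

(* k <= rc(sigma), where rc(sigma) = inf { m | sigma(eta'^m(not phi')) } *)
Definition le_rc d (phi : Fml d) (eta : 'I_d -> {mpoly int[d]}) (s : 'I_d -> int) (k : nat) : Prop :=
  forall m, (m < k)%N -> fml_holds (fml_subst phi (eta_pow eta m)) s.

Definition loop_size_bound d (phi : Fml d) (eta : 'I_d -> {mpoly int[d]})
    (SB : 'I_d -> Bound 'I_d) : Prop :=
  forall (x : 'I_d) (s : 'I_d -> int) (k : nat), le_rc phi eta s k ->
    ele (Some `|(eta_pow eta k x).@[s]|%N) (beval (absst s) (SB x)).

(* Loop (phi', eta') corresponds to transition t = (l, phi, eta, l) via pi:
   pi injective (a bijection onto V' = image of pi), phi = pi(phi'),
   eta(pi x_i) = pi(eta'(x_i)), and eta(x) = x for x outside V'. *)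
Definition corresponds n (Loc : finType) (P : IntProg n Loc) (t : TI P) d
    (phi : Fml d) (eta : 'I_d -> {mpoly int[d]}) (pi : 'I_d -> 'I_n) : Prop :=
  src t = tgt t /\ injective pi /\
  guard t = fml_rename pi phi /\
  (forall i, upd t (pi i) = mpoly_rename pi (eta i)) /\
  (forall x, (forall i, pi i != x) -> upd t x = 'X_x).

Definition transfer_bound d n (pi : 'I_d -> 'I_n) (SB : 'I_d -> Bound 'I_d)
    (x : 'I_n) : Bound 'I_n :=
  match [pick i | pi i == x] with
  | Some i => bmap pi (SB i)
  | None => BVar x
  end.

From mathcomp Require Import all_boot all_algebra.
From mathcomp Require Import mpoly.
Set Implicit Arguments. Unset Strict Implicit. Unset Printing Implicit Defensive.
Import GRing.Theory Num.Theory.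

(* Restricted to the renamed variables pi(x_1), ..., pi(x_d), a run of [tL] is
   a run of the loop L: after k executions of [tL] the state is
   sigma o pi updated by eta'^k, and the guard held at each of the k earlier
   states, so k <= rc(sigma o pi) and the size bound of L applies.  Every
   other variable x keeps its initial value, which is bounded by x itself. *)

Local Open Scope ring_scope.

Lemma meval_map_mpoly (R S : comNzRingType) (f : {rmorphism R -> S}) k
    (q : {mpoly R[k]}) (u : 'I_k -> R) :
  injective f -> (map_mpoly f q).@[f \o u] = f q.@[u].
Proof.
move=> f_inj; rewrite !mevalE (perm_big _ (msupp_map_mpoly _ f_inj)).
rewrite rmorph_sum; apply: eq_bigr => m _.
rewrite mcoeff_map_mpoly rmorphM rmorph_prod; congr (_ * _).
by apply: eq_bigr => i _; rewrite rmorphXn.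
Qed.

Lemma eq_fml_holds n (phi : Fml n) (s1 s2 : 'I_n -> int) :
  s1 =1 s2 -> fml_holds phi s1 = fml_holds phi s2.
Proof.
move=> eq_s; elim: phi => [p|a IHa b IHb|a IHa b IHb] /=; rewrite ?IHa ?IHb //.
by congr (0 < _); apply: meval_eq => i; rewrite eq_s.
Qed.

Lemma fml_holds_rename d n (pi : 'I_d -> 'I_n) (phi : Fml d) (s : 'I_n -> int) :
  fml_holds (fml_rename pi phi) s = fml_holds phi (s \o pi).
Proof.
elim: phi => [p|a IHa b IHb|a IHa b IHb] /=; rewrite ?IHa ?IHb //.
rewrite /mpoly_rename comp_mpoly_meval; congr (0 < _).
by apply: meval_eq => i; rewrite tnth_mktuple mevalXU.
Qed.

Lemma fml_holds_subst d k (phi : Fml d) (f : 'I_d -> {mpoly int[k]})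
    (s : 'I_k -> int) :
  fml_holds (fml_subst phi f) s = fml_holds phi (fun i => (f i).@[s]).
Proof.
elim: phi => [p|a IHa b IHb|a IHa b IHb] /=; rewrite ?IHa ?IHb //.
rewrite comp_mpoly_meval; congr (0 < _); apply: meval_eq => i.
by rewrite tnth_mktuple; apply: meval_map_mpoly; apply: intr_inj.
Qed.

Lemma meval_eta_powS d (eta : 'I_d -> {mpoly int[d]}) k x (u : 'I_d -> int) :
  (eta_pow eta k.+1 x).@[u] = (eta_pow eta k x).@[fun i => (eta i).@[u]].
Proof.
by rewrite /= comp_mpoly_meval; apply: meval_eq => i; rewrite tnth_mktuple.
Qed.

Lemma le_rcS d (phi : Fml d) (eta : 'I_d -> {mpoly int[d]}) u v k :
  fml_holds phi u -> v =1 (fun i => (eta i).@[u]) ->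
  le_rc phi eta v k -> le_rc phi eta u k.+1.
Proof.
move=> phi_u eq_v rc_v [|m] lt_mk; rewrite fml_holds_subst.
  by rewrite (@eq_fml_holds _ _ _ u) // => i; rewrite mevalXU.
rewrite (@eq_fml_holds _ _ _ (fun i => (eta_pow eta m i).@[v])).
  by rewrite -fml_holds_subst; apply: rc_v.
by move=> i; rewrite meval_eta_powS; apply: meval_eq.
Qed.

Lemma beval_bmap X Y (f : X -> Y) (e : Y -> nat) (b : Bound X) :
  beval e (bmap f b) = beval (e \o f) b.
Proof. by elim: b => //= [a -> c ->|a -> c ->|k a ->]. Qed.

Lemma star_rcons n (Loc : finType) (P : IntProg n Loc) (T' : pred (TI P)) t
    l s l1 s1 l2 s2 :
  t \in T' -> star T' l s l1 s1 -> step t l1 s1 l2 s2 -> star T' l s l2 s2.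
Proof.
move=> tT'; elim=> {l s l1 s1} [l s|l s la sa lb sb t' t'T' st _ IH] last_step.
- exact: star_step tT' last_step (star_refl _ _ _).
- exact: star_step t'T' st (IH last_step).
Qed.

Section LoopRuns.
Variables (n : nat) (Loc : finType) (P : IntProg n Loc) (tL : TI P).
Variables (d : nat) (phi : Fml d) (eta : 'I_d -> {mpoly int[d]}) (pi : 'I_d -> 'I_n).
Hypothesis corr : corresponds tL phi eta pi.

Lemma step_corresponds l s l' s' :
  step tL l s l' s' ->
  [/\ fml_holds phi (s \o pi),
      forall i, s' (pi i) = (eta i).@[s \o pi] &
      forall x, (forall i, pi i != x) -> s' x = s x].
Proof.
case: corr => _ [_ [guardE [updE upd_id]]] [_ [_ [guard_s s'E]]]; split.
- by rewrite -fml_holds_rename -guardE.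
- move=> i; rewrite s'E updE /mpoly_rename comp_mpoly_meval.
  by apply: meval_eq => j; rewrite tnth_mktuple mevalXU.
- by move=> x x_out; rewrite s'E upd_id // mevalXU.
Qed.

Lemma star_corresponds l s l' s' :
  star (pred1 tL) l s l' s' ->
  exists k, [/\ le_rc phi eta (s \o pi) k,
    forall i, s' (pi i) = (eta_pow eta k i).@[s \o pi] &
    forall x, (forall i, pi i != x) -> s' x = s x].
Proof.
elim=> {l s l' s'} [l s|l s l1 s1 l2 s2 t /eqP-> st _ [k [rc_k s2E s2_out]]].
  by exists 0%N; split=> // i; rewrite /= mevalXU.
have [guard_s s1E s1_out] := step_corresponds st.
exists k.+1; split.
- exact: le_rcS guard_s s1E rc_k.
- by move=> i; rewrite s2E meval_eta_powS; apply: meval_eq => j; exact: s1E.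
- by move=> x x_out; rewrite s2_out // s1_out.
Qed.

End LoopRuns.

Theorem lemma35 (n : nat) (Loc : finType) (P : IntProg n Loc) (tL : TI P)
    (d : nat) (phi : Fml d) (eta : 'I_d -> {mpoly int[d]}) (pi : 'I_d -> 'I_n)
    (SBL : 'I_d -> Bound 'I_d) :
  ~~ T0 tL ->
  corresponds tL phi eta pi ->
  loop_size_bound phi eta SBL ->
  local_size_bound (pred1 tL) tL (transfer_bound pi SBL).
Proof.
(* Neither [~~ T0 tL], the entry condition, nor the injectivity of [pi] is
   needed: the bound holds for every run of [tL], wherever it starts. *)
move=> _ corr loop_bound x s l l' s' _ [l1 [s1 [run last_step]]].
have run' : star (pred1 tL) l s l' s' by apply: star_rcons run last_step; rewrite inE.
have [k [rc_k s'E s'_out]] := star_corresponds corr run'.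
rewrite /transfer_bound; case: pickP => [i /eqP <- | x_out].
- by rewrite beval_bmap s'E; exact: loop_bound rc_k.
- by rewrite /= s'_out // => i; rewrite x_out.
Qed.
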